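(* The subvarieties $\mathsf{BA}$ and $\mathsf{SL}$ of $V(\mathsf{BCA})$ are independent. That is, there is a binary term $\varphi(x,y)$ in the type $\langle\wedge,\vee,\neg,J_2,0,1\rangle$ such that $\mathsf{BA}\models\varphi(x,y)\approx x$ and $\mathsf{SL}\models\varphi(x,y)\approx y$.
   Context: $\mathbf{WK}^e$ is the three-element algebra on $\{0,\tfrac12,1\}$ of type $\langle\wedge,\vee,\neg,J_2,0,1\rangle$. Its operations are: - $\neg$ swaps $0,1$ and fixes $\tfrac12$; - $\wedge,\vee$ are Boolean on $\{0,1\}$ and return $\tfrac12$ if some argument is $\tfrac12$; - $J_2(1)=1$ and $J_2(\tfrac12)=J_2(0)=0$. $\mathsf{BCA}=ISP(\mathbf{WK}^e)$ and $V(\mathsf{BCA})=HSP(\mathbf{WK}^e)$. $\mathsf{BA}$ is the subvariety of $V(\mathsf{BCA})$ axiomatised relative to it by $J_2x\approx x$. $\mathsf{SL}$ is the subvariety axiomatised relative to it by $J_2x\approx1$. *)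

Record alg : Type := Alg {
  car :> Type;
  a_meet : car -> car -> car;
  a_join : car -> car -> car;
  a_neg : car -> car;
  a_J2 : car -> car;
  a_zero : car;
  a_one : car
}.

Inductive term (V : Type) : Type :=
  | tVar : V -> term V
  | tMeet : term V -> term V -> term V
  | tJoin : term V -> term V -> term V
  | tNeg : term V -> term V
  | tJ2 : term V -> term V
  | tZero : term V
  | tOne : term V.
Arguments tVar {V} _.
Arguments tMeet {V} _ _.
Arguments tJoin {V} _ _.
Arguments tNeg {V} _.
Arguments tJ2 {V} _.
Arguments tZero {V}.
Arguments tOne {V}.

Fixpoint eval (A : alg) {V : Type} (v : V -> A) (t : term V) : A :=
  match t with
  | tVar x => v x
  | tMeet s u => a_meet A (eval A v s) (eval A v u)
  | tJoin s u => a_join A (eval A v s) (eval A v u)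
  | tNeg s => a_neg A (eval A v s)
  | tJ2 s => a_J2 A (eval A v s)
  | tZero => a_zero A
  | tOne => a_one A
  end.

Definition models (A : alg) {V : Type} (s t : term V) : Prop :=
  forall v : V -> A, eval A v s = eval A v t.

Inductive three : Type := T0 | Thalf | T1.

Definition wk_neg (a : three) : three :=
  match a with T0 => T1 | Thalf => Thalf | T1 => T0 end.
Definition wk_meet (a b : three) : three :=
  match a, b with
  | Thalf, _ | _, Thalf => Thalf
  | T1, T1 => T1
  | _, _ => T0
  end.
Definition wk_join (a b : three) : three :=
  match a, b with
  | Thalf, _ | _, Thalf => Thalf
  | T0, T0 => T0
  | _, _ => T1
  end.
Definition wk_J2 (a : three) : three :=
  match a with T1 => T1 | _ => T0 end.

Definition WKe : alg := Alg three wk_meet wk_join wk_neg wk_J2 T0 T1.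

(** H S P (WK^e): A is a homomorphic image of a subalgebra of a direct power
    WK^e^I. *)
Definition in_VBCA (A : alg) : Prop :=
  exists (I : Type) (S : (I -> three) -> Prop) (f : (I -> three) -> A),
    (forall x y, S x -> S y -> S (fun i => wk_meet (x i) (y i))) /\
    (forall x y, S x -> S y -> S (fun i => wk_join (x i) (y i))) /\
    (forall x, S x -> S (fun i => wk_neg (x i))) /\
    (forall x, S x -> S (fun i => wk_J2 (x i))) /\
    S (fun _ => T0) /\ S (fun _ => T1) /\
    (forall x y, S x -> S y ->
       f (fun i => wk_meet (x i) (y i)) = a_meet A (f x) (f y)) /\
    (forall x y, S x -> S y ->
       f (fun i => wk_join (x i) (y i)) = a_join A (f x) (f y)) /\
    (forall x, S x -> f (fun i => wk_neg (x i)) = a_neg A (f x)) /\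
    (forall x, S x -> f (fun i => wk_J2 (x i)) = a_J2 A (f x)) /\
    f (fun _ => T0) = a_zero A /\ f (fun _ => T1) = a_one A /\
    (forall a : A, exists x, S x /\ f x = a).

Definition in_BA (A : alg) : Prop :=
  in_VBCA A /\ models A (tJ2 (tVar tt)) (tVar tt).
Definition in_SL (A : alg) : Prop :=
  in_VBCA A /\ models A (tJ2 (tVar tt)) tOne.

Inductive xy : Type := vx | vy.

(* Take phi(x, y) := J2 x ∨ (y ∧ ¬ J2 y).  Every identity of WK^e holds in
   V(BCA), since evaluation in a power of WK^e is pointwise and commutes with
   a homomorphism defined on a subuniverse.  In BA, J2 is the identity, and
   the WK^e identity x ∨ (J2 y ∧ ¬ J2 y) ≈ x collapses phi to x.  In SL, the
   WK^e identity J2 0 ≈ 0 forces 0 = 1, and then phi = 1 ∨ (y ∧ ¬ 1) becomes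
   0 ∨ (y ∧ ¬ 0), which is y by another identity of WK^e. *)

From Stdlib Require Import FunctionalExtensionality IndefiniteDescription.

Definition WKe_power (I : Type) : alg :=
  Alg (I -> three)
      (fun x y i => wk_meet (x i) (y i)) (fun x y i => wk_join (x i) (y i))
      (fun x i => wk_neg (x i)) (fun x i => wk_J2 (x i))
      (fun _ => T0) (fun _ => T1).

Lemma eval_WKe_power (I V : Type) (w : V -> I -> three) (t : term V) :
  eval (WKe_power I) w t = fun i => eval WKe (fun x => w x i) t.
Proof.
  induction t as [x | s IHs u IHu | s IHs u IHu | s IHs | s IHs | |]; simpl;
    try rewrite IHs; try rewrite IHu; reflexivity.
Qed.

Section HomomorphicImage.

Variables (A : alg) (I : Type) (S : (I -> three) -> Prop) (f : (I -> three) -> A).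

Hypothesis S_meet : forall x y, S x -> S y -> S (fun i => wk_meet (x i) (y i)).
Hypothesis S_join : forall x y, S x -> S y -> S (fun i => wk_join (x i) (y i)).
Hypothesis S_neg : forall x, S x -> S (fun i => wk_neg (x i)).
Hypothesis S_J2 : forall x, S x -> S (fun i => wk_J2 (x i)).
Hypothesis S_zero : S (fun _ => T0).
Hypothesis S_one : S (fun _ => T1).

Lemma subuniverse_eval (V : Type) (w : V -> I -> three) (t : term V) :
  (forall x, S (w x)) -> S (eval (WKe_power I) w t).
Proof.
  intro Sw; induction t; simpl; auto.
Qed.

Hypothesis f_meet : forall x y, S x -> S y ->
  f (fun i => wk_meet (x i) (y i)) = a_meet A (f x) (f y).
Hypothesis f_join : forall x y, S x -> S y ->
  f (fun i => wk_join (x i) (y i)) = a_join A (f x) (f y).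
Hypothesis f_neg : forall x, S x -> f (fun i => wk_neg (x i)) = a_neg A (f x).
Hypothesis f_J2 : forall x, S x -> f (fun i => wk_J2 (x i)) = a_J2 A (f x).
Hypothesis f_zero : f (fun _ => T0) = a_zero A.
Hypothesis f_one : f (fun _ => T1) = a_one A.

Lemma hom_eval (V : Type) (w : V -> I -> three) (t : term V) :
  (forall x, S (w x)) -> f (eval (WKe_power I) w t) = eval A (fun x => f (w x)) t.
Proof.
  intro Sw; induction t; simpl;
    try rewrite <- IHt; try rewrite <- IHt1, <- IHt2;
    auto using subuniverse_eval.
Qed.

End HomomorphicImage.

Lemma models_of_in_VBCA (A : alg) (V : Type) (s t : term V) :
  in_VBCA A -> models WKe s t -> models A s t.
Proof.
  intros (I & S & f & Sm & Sj & Sn & SJ & S0 & S1 & fm & fj & fn & fJ & f0 & f1 & f_onto)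
         Hst v.
  destruct (functional_choice (fun x a => S a /\ f a = v x) (fun x => f_onto (v x)))
    as [w Hw].
  replace v with (fun x => f (w x)) by (extensionality x; apply Hw).
  assert (Sw : forall x, S (w x)) by (intro x; apply Hw).
  rewrite <- !(hom_eval A I S f Sm Sj Sn SJ S0 S1 fm fj fn fJ f0 f1 V w _ Sw).
  rewrite !eval_WKe_power; f_equal; extensionality i; apply Hst.
Qed.

Lemma WKe_join_J2_contradiction :
  models WKe (tJoin (tVar vx) (tMeet (tJ2 (tVar vy)) (tNeg (tJ2 (tVar vy))))) (tVar vx).
Proof.
  intro v; simpl; destruct (v vx), (v vy); reflexivity.
Qed.

Lemma WKe_J2_zero : models WKe (V := xy) (tJ2 tZero) tZero.
Proof.
  intro v; reflexivity.
Qed.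

Lemma WKe_zero_join_meet_neg_zero :
  models WKe (tJoin tZero (tMeet (tVar vy) (tNeg tZero))) (tVar vy).
Proof.
  intro v; simpl; destruct (v vy); reflexivity.
Qed.

Lemma in_BA_J2 (A : alg) : in_BA A -> forall a : A, a_J2 A a = a.
Proof.
  intros [_ HJ] a; exact (HJ (fun _ => a)).
Qed.

Lemma in_SL_J2 (A : alg) : in_SL A -> forall a : A, a_J2 A a = a_one A.
Proof.
  intros [_ HJ] a; exact (HJ (fun _ => a)).
Qed.

Lemma in_SL_zero_one (A : alg) : in_SL A -> a_zero A = a_one A.
Proof.
  intro HA.
  rewrite <- (in_SL_J2 A HA (a_zero A)).
  symmetry; exact (models_of_in_VBCA A xy _ _ (proj1 HA) WKe_J2_zero (fun _ => a_zero A)).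
Qed.

Definition independence_term : term xy :=
  tJoin (tJ2 (tVar vx)) (tMeet (tVar vy) (tNeg (tJ2 (tVar vy)))).

Theorem theorem4p10 :
  exists phi : term xy,
    (forall A : alg, in_BA A -> models A phi (tVar vx)) /\
    (forall A : alg, in_SL A -> models A phi (tVar vy)).
Proof.
  exists independence_term; split.
  - intros A HA v.
    pose proof (models_of_in_VBCA A xy _ _ (proj1 HA) WKe_join_J2_contradiction v) as E.
    simpl in *; rewrite !(in_BA_J2 A HA) in *.
    exact E.
  - intros A HA v.
    pose proof (models_of_in_VBCA A xy _ _ (proj1 HA) WKe_zero_join_meet_neg_zero v) as E.
    simpl in *; rewrite (in_SL_zero_one A HA) in E.
    rewrite !(in_SL_J2 A HA).
    exact E.
Qed.
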